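(* Let $R$ be a commutative ring and $n\ge3$. Let $(v,w)\in H(R^n)$ with $q(v,w)=v\cdot w^{\intercal}=1$, and let $g\in\operatorname{Epin}_{2n}(R)$. Then, computing in the Clifford algebra $\mathrm{Cl}$ of $(H(R^n),q)$, there exists $\sigma\in E_n(R)$ such that $$g\,(v,w)\,g^{-1}=\big(v\sigma,\;w(\sigma^{\intercal})^{-1}\big).$$
   Context: $H(R^n)=R^n\oplus(R^n)^*$ (elements written as pairs $(v,w)$ of row vectors in $R^n$) with quadratic form $q(v,w)=v\cdot w^{\intercal}$; let $e_1,\dots,e_n,f_1,\dots,f_n$ be its standard basis. $\mathrm{Cl}=\mathrm{Cl}_0\oplus\mathrm{Cl}_1$ is the Clifford algebra of $(H(R^n),q)$ with its $\mathbb{Z}/2$-grading, containing $H(R^n)$ in $\mathrm{Cl}_1$; $x\mapsto x^*$ is its canonical involution (the anti-automorphism that is the identity on $H(R^n)$). $\operatorname{Spin}_{2n}(R)=\{x\in\mathrm{Cl}_0: xx^*=1,\ xH(R^n)x^{-1}=H(R^n)\}$, and $\pi:\operatorname{Spin}_{2n}(R)\to O(H(R^n))$, $\pi(g)(u)=gug^{-1}$. Let $\partial=(1\ n+1)\cdots(n\ 2n)$ and $E^o_{ij}(\lambda)=I_{2n}+\lambda(e_{ij}-e_{\partial(j)\partial(i)})$ for $1\le i\ne j\le 2n$, $\lambda\in R$ ($e_{ij}$ matrix units); $EO_{2n}(R)$ is the group they generate, viewed as a group of orthogonal transformations of $H(R^n)$ via matrices in the ordered basis $(e_1,\dots,e_n,f_1,\dots,f_n)$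 (this group is closed under transposition). $\operatorname{Epin}_{2n}(R)=\pi^{-1}(EO_{2n}(R))$. $E_n(R)$ is the subgroup of $GL_n(R)$ generated by elementary matrices $I+\lambda e_{ij}$, $i\ne j$. *)

From HB Require Import structures.
From mathcomp Require Import all_boot all_order all_algebra.
Set Implicit Arguments. Unset Strict Implicit. Unset Printing Implicit Defensive.
Import Order.TTheory GRing.Theory Num.Theory.
Local Open Scope ring_scope.

(* H(R^n) = R^n (+) (R^n)^* is represented by row vectors 'rV[R]_(n+n):
   the element (v,w) is row_mx v w, i.e. coordinates in the ordered basis
   (e_1,...,e_n,f_1,...,f_n). *)

Section Hyperbolic.
Variables (R : comPzRingType) (n : nat).

Definition qH (x : 'rV[R]_(n + n)) : R := (lsubmx x *m (rsubmx x)^T) 0 0.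

(* 0-based version of the involution partial = (1 n+1)...(n 2n) *)
Definition dpart (k : nat) : nat := (if k < n then k + n else k - n)%N.

Definition EOgen (i j : 'I_(n + n)) (l : R) : 'M[R]_(n + n) :=
  \matrix_(a, b) ((a == b)%:R
                  + l * ((a == i) && (b == j))%:R
                  - l * ((dpart a == j) && (dpart b == i))%:R).

(* EO_{2n}(R): the group generated by the E^o_{ij}(l), i <> j.
   (Each generator has inverse E^o_{ij}(-l), so the generated monoid is
   the generated group.) *)
Inductive in_EO : 'M[R]_(n + n) -> Prop :=
| EO_one : in_EO 1%:M
| EO_mul (i j : 'I_(n + n)) (l : R) (M : 'M[R]_(n + n)) :
    i != j -> in_EO M -> in_EO (EOgen i j l *m M).

Inductive in_En : 'M[R]_n -> Prop :=
| En_one : in_En 1%:M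
| En_mul (i j : 'I_n) (l : R) (M : 'M[R]_n) :
    i != j -> in_En M -> in_En ((1%:M + l *: delta_mx i j) *m M).

End Hyperbolic.

Section Clifford.
Variables (R : comPzRingType) (n : nat).

Definition clifford_rel (B : algType R) (phi : 'rV[R]_(n + n) -> B) :=
  forall x, phi x * phi x = (qH x)%:A.

Definition clifford_universal (A : algType R)
    (iota : {linear 'rV[R]_(n + n) -> A}) :=
  forall (B : algType R) (phi : {linear 'rV[R]_(n + n) -> B}),
    clifford_rel phi ->
    exists f : {lrmorphism A -> B},
      (forall x, f (iota x) = phi x) /\
      (forall f' : {lrmorphism A -> B},
          (forall x, f' (iota x) = phi x) -> f' =1 f).

Variables (A : unitAlgType R) (iota : {linear 'rV[R]_(n + n) -> A}).

Inductive in_Cl0 : A -> Prop :=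
| Cl0_one : in_Cl0 1
| Cl0_mul x u v : in_Cl0 x -> in_Cl0 (x * iota u * iota v)
| Cl0_add x y : in_Cl0 x -> in_Cl0 y -> in_Cl0 (x + y)
| Cl0_scale (a : R) x : in_Cl0 x -> in_Cl0 (a *: x).

Definition canonical_involution (star : A -> A) :=
  [/\ forall x y, star (x + y) = star x + star y,
      forall (a : R) x, star (a *: x) = a *: star x,
      star 1 = 1,
      forall x y, star (x * y) = star y * star x &
      forall u, star (iota u) = iota u].

Definition in_Spin (star : A -> A) (g : A) :=
  [/\ in_Cl0 g, g * star g = 1, g \is a GRing.unit,
      forall u, exists u', g * iota u * g^-1 = iota u' &
      forall u', exists u, g * iota u * g^-1 = iota u'].

(* pi(g) lies in EO_{2n}(R): its matrix (row-vector convention; EO is closed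
   under transposition, so the convention is immaterial) is in EO. *)
Definition pi_in_EO (g : A) :=
  exists M : 'M[R]_(n + n), in_EO M /\
    forall x, g * iota x * g^-1 = iota (x *m M).

Definition in_Epin (star : A -> A) (g : A) := in_Spin star g /\ pi_in_EO g.

End Clifford.

From HB Require Import structures.
From mathcomp Require Import all_boot all_order all_algebra.
From mathcomp Require Import ring zify.
Set Implicit Arguments.
Unset Strict Implicit.
Unset Printing Implicit Defensive.

Import GRing.Theory.
Local Open Scope ring_scope.

(* If pi(g) has matrix M in EO_2n(R), then g (v, w) g^-1 = (v, w) M, so it
   suffices that every M in EO_2n(R) sends each pair with v w^T = 1 to
   (v sigma, w sigma^-T) for some sigma in E_n(R).  This property is stable
   under products, so only the generators E^o_ij(l) need checking, and each
   of them acts on v by a transvection 1 + c r with r c = 0 (and on w by its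
   inverse transpose).  In the mixed cases, where v w^T = 1 is used, c or r
   is l (x_i e_j - x_j e_i) with x = w or v, a row orthogonal to x; as n >= 3
   it has a zero coordinate k, and then 1 + c r is a product of elementary
   matrices by Suslin's commutator trick. *)

Lemma mul1D_orth (T : pzRingType) (p q : T) :
  p * q = 0 -> (1 + p) * (1 + q) = 1 + (p + q).
Proof.
by move=> pq; rewrite mulrDl mul1r mulrDr mulr1 pq addr0 -addrA [q + p]addrC.
Qed.

Lemma commutator_1D (T : pzRingType) (p q : T) :
  p * p = 0 -> q * q = 0 -> q * p = 0 ->
  (1 + p) * (1 + q) * (1 - p) * (1 - q) = 1 + p * q.
Proof.
move=> pp qq qp.
have -> : (1 + p) * (1 + q) * (1 - p) = 1 + (q + p * q).
  rewrite !(mulrDl, mulrDr, mulrBl, mulrBr, mul1r, mulr1).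
  rewrite !mulrN -!mulrA qp pp mulr0 !oppr0 !addr0.
  by rewrite [p + _]addrC addrA addrK addrA.
rewrite mul1D_orth ?mulrN ?mulrDl -?mulrA ?qq ?mulr0 ?addr0 ?oppr0 //.
by rewrite addrAC subrr add0r.
Qed.

Section ElementaryGroup.
Variables (R : comPzRingType) (n : nat).
Implicit Types (M N : 'M[R]_n) (c : 'cV[R]_n) (r : 'rV[R]_n).

Lemma mulmx_1D_orth M N :
  M *m N = 0 -> (1%:M + M) *m (1%:M + N) = 1%:M + (M + N).
Proof. by rewrite !mulmxE idmxE; exact: mul1D_orth. Qed.

Lemma En_mulmx M N : in_En M -> in_En N -> in_En (M *m N).
Proof.
elim=> [|i j l M' ij _ IH] EN; first by rewrite mul1mx.
by rewrite -mulmxA; apply: En_mul => //; apply: IH.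
Qed.

Lemma En_elementary (i j : 'I_n) (l : R) :
  i != j -> in_En (1%:M + l *: delta_mx i j).
Proof.
by move=> ij; rewrite -[X in in_En X]mulmx1; apply: En_mul => //; exact: En_one.
Qed.

Lemma En_trmx M : in_En M -> in_En M^T.
Proof.
elim=> [|i j l M' ij _ IH]; first by rewrite trmx1; exact: En_one.
rewrite trmx_mul; apply: En_mulmx => //.
rewrite linearD /= trmx1 linearZ /= trmx_delta.
by apply: En_elementary; rewrite eq_sym.
Qed.

Lemma delta_mx_mul_col c (k : 'I_n) : delta_mx 0 k *m c = (c k 0)%:M.
Proof.
by rewrite -rowE; apply/rowP => b; rewrite !mxE (ord1 b) eqxx mulr1n.
Qed.

Lemma En_1D_col c (k : 'I_n) : c k 0 = 0 -> in_En (1%:M + c *m delta_mx 0 k).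
Proof.
move=> ck.
pose P c' := c' k 0 = 0 /\ in_En (1%:M + c' *m delta_mx 0 k).
have -> : c = \sum_(a < n) c a 0 *: delta_mx a 0.
  by rewrite {1}[c]matrix_sum_delta; apply: eq_bigr => a _; rewrite big_ord1.
suff [] : P (\sum_(a < n) c a 0 *: delta_mx a 0) by [].
apply: (big_ind P).
- by split; [rewrite mxE | rewrite mul0mx addr0; exact: En_one].
- move=> d1 d2 [d1k E1] [d2k E2]; split; first by rewrite mxE d1k d2k addr0.
  rewrite mulmxDl -mulmx_1D_orth; first exact: En_mulmx.
  rewrite -mulmxA [delta_mx _ _ *m _]mulmxA delta_mx_mul_col d2k.
  by rewrite mul_scalar_mx scale0r mulmx0.
- move=> a _; have [-> | ak] := eqVneq a k.
    by split; rewrite ck scale0r ?mxE ?mul0mx ?addr0 //; exact: En_one.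
  split; first by rewrite !mxE eqxx andbT eq_sym (negbTE ak) mulr0.
  by rewrite -scalemxAl mul_delta_mx; apply: En_elementary.
Qed.

Lemma En_1D_row r (k : 'I_n) : r 0 k = 0 -> in_En (1%:M + delta_mx k 0 *m r).
Proof.
move=> rk; have := @En_1D_col r^T k; rewrite mxE => /(_ rk)/En_trmx.
by rewrite linearD /= trmx1 trmx_mul trmx_delta trmxK.
Qed.

Lemma row_mul_delta_mx r (k : 'I_n) : r *m delta_mx k 0 = (r 0 k)%:M.
Proof.
by rewrite -colE; apply/rowP => b; rewrite !mxE (ord1 b) eqxx mulr1n.
Qed.

Lemma En_transvection_col_row c r (k : 'I_n) :
  c k 0 = 0 -> r 0 k = 0 -> r *m c = 0 -> in_En (1%:M + c *m r).
Proof.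
move=> ck rk rc.
set p := c *m delta_mx 0 k; set q := delta_mx k 0 *m r.
have pp : p *m p = 0.
  by rewrite mulmxA -[c *m _ *m c]mulmxA delta_mx_mul_col ck mul_mx_scalar
             scale0r mul0mx.
have qq : q *m q = 0.
  by rewrite mulmxA -[_ *m r *m _]mulmxA row_mul_delta_mx rk mul_mx_scalar
             scale0r mul0mx.
have qp : q *m p = 0 by rewrite mulmxA -[_ *m r *m c]mulmxA rc mulmx0 mul0mx.
have <- : p *m q = c *m r.
  rewrite mulmxA -[c *m _ *m _]mulmxA delta_mx_mul_col.
  by rewrite mxE eqxx mulr1n mulmx1.
have -> : 1%:M + p *m q
          = (1%:M + p) *m (1%:M + q) *m (1%:M - p) *m (1%:M - q).
  by move: pp qq qp; rewrite !mulmxE idmxE => pp qq qp; rewrite commutator_1D.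
apply: En_mulmx; [apply: En_mulmx; [apply: En_mulmx|]|].
- exact: En_1D_col.
- exact: En_1D_row.
- by rewrite -mulNmx; apply: En_1D_col; rewrite mxE ck oppr0.
- by rewrite -mulmxN; apply: En_1D_row; rewrite mxE rk oppr0.
Qed.

Lemma En_transvection_col c r (k : 'I_n) :
  c k 0 = 0 -> r *m c = 0 -> in_En (1%:M + c *m r).
Proof.
move=> ck rc; set e := r 0 k *: delta_mx (0 : 'I_1) k; set d := r - e.
have dk : d 0 k = 0 by rewrite !mxE !eqxx mulr1 subrr.
have dc : d *m c = 0.
  by rewrite mulmxBl rc -scalemxAl delta_mx_mul_col ck raddf0 scaler0 subr0.
have -> : c *m r = c *m d + c *m e by rewrite -mulmxDr subrK.
rewrite -mulmx_1D_orth; last first.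
  by rewrite mulmxA -[c *m d *m c]mulmxA dc mulmx0 mul0mx.
apply: En_mulmx; first exact: (En_transvection_col_row ck dk dc).
by rewrite /e -scalemxAr scalemxAl; apply: En_1D_col; rewrite mxE ck mulr0.
Qed.

Lemma En_transvection_row c r (k : 'I_n) :
  r 0 k = 0 -> r *m c = 0 -> in_En (1%:M + c *m r).
Proof.
move=> rk rc; have := @En_transvection_col r^T c^T k.
rewrite mxE -trmx_mul rc trmx0 => /(_ rk erefl)/En_trmx.
by rewrite linearD /= trmx1 trmx_mul !trmxK.
Qed.

End ElementaryGroup.

Lemma exists_ord_neq2 n (i j : 'I_n) :
  (3 <= n)%N -> exists k : 'I_n, (k != i) && (k != j).
Proof.
move=> n3; have : (0 < #|~: [set i; j]|)%N.
  by have := cards2 i j; rewrite [#|[set i; j]|]cardsCs card_ord; lia.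
by case/card_gt0P => k; rewrite !inE negb_or; exists k.
Qed.

Section Involution.
Variable n : nat.

Lemma dpart_lt (a : 'I_(n + n)) : (dpart n a < n + n)%N.
Proof. by have := ltn_ord a; rewrite /dpart; case: ifP; lia. Qed.

Definition dp (a : 'I_(n + n)) : 'I_(n + n) := Ordinal (dpart_lt a).

Lemma dpK : involutive dp.
Proof.
move=> a; apply: val_inj => /=; have := ltn_ord a; rewrite /dpart.
by case: (ltnP a n) => ?; case: ifP; lia.
Qed.

Lemma dp_lshift (i : 'I_n) : dp (lshift n i) = rshift n i.
Proof.
by apply: val_inj => /=; have := ltn_ord i; rewrite /dpart /=; case: ifP; lia.
Qed.

Lemma dp_rshift (i : 'I_n) : dp (rshift n i) = lshift n i.
Proof.
by apply: val_inj => /=; have := ltn_ord i; rewrite /dpart /=; case: ifP; lia.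
Qed.

Lemma EOgenE (R : comPzRingType) (i j : 'I_(n + n)) (l : R) :
  EOgen i j l = 1%:M + l *: delta_mx i j - l *: delta_mx (dp j) (dp i).
Proof.
have dpartE (a b : 'I_(n + n)) : (dpart n a == b) = (a == dp b).
  by rewrite -[_ == _]/(dp a == b); apply/eqP/eqP => [<-|->]; rewrite dpK.
by apply/matrixP => a b; rewrite !mxE !dpartE.
Qed.

End Involution.

Section HyperbolicAction.
Variables (R : comPzRingType) (n : nat).
Implicit Types (sigma tau : 'M[R]_n) (c : 'cV[R]_n) (r v w x : 'rV[R]_n).

Definition En_pair sigma tau :=
  [/\ in_En sigma, tau *m sigma^T = 1%:M & sigma^T *m tau = 1%:M].

Lemma En_pair1 : En_pair 1%:M 1%:M.
Proof. by split; rewrite ?trmx1 ?mulmx1 //; exact: En_one. Qed.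

Lemma En_pair_mul sigma1 tau1 sigma2 tau2 :
  En_pair sigma1 tau1 -> En_pair sigma2 tau2 ->
  En_pair (sigma1 *m sigma2) (tau1 *m tau2).
Proof.
move=> [E1 l1 r1] [E2 l2 r2]; split; first exact: En_mulmx.
- by rewrite trmx_mul mulmxA -[tau1 *m tau2 *m _]mulmxA l2 mulmx1 l1.
- by rewrite trmx_mul mulmxA -[sigma2^T *m sigma1^T *m _]mulmxA r1 mulmx1 r2.
Qed.

Lemma En_pair_transvection c r (k : 'I_n) :
  c k 0 = 0 \/ r 0 k = 0 -> r *m c = 0 ->
  En_pair (1%:M + c *m r) (1%:M - (c *m r)^T).
Proof.
move=> crk rc; have N2 : (c *m r)^T *m (c *m r)^T = 0.
  by rewrite -trmx_mul mulmxA -[c *m r *m c]mulmxA rc mulmx0 mul0mx trmx0.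
rewrite /En_pair linearD /= trmx1; split.
- by case: crk => [ck | rk];
    [exact: En_transvection_col ck rc | exact: En_transvection_row rk rc].
- move: N2; rewrite !mulmxE idmxE => N2.
  by rewrite mulrDr mulr1 mulrBl mul1r N2 subr0 subrK.
- move: N2; rewrite !mulmxE idmxE => N2.
  by rewrite mulrBr mulr1 mulrDl mul1r N2 addr0 addrK.
Qed.

Lemma mulmx_transvection x c r : x *m (1%:M + c *m r) = x + (x *m c) 0 0 *: r.
Proof. by rewrite mulmxDr mulmx1 mulmxA -mul_scalar_mx -mx11_scalar. Qed.

Lemma mulmx_transvection_invT x c r :
  x *m (1%:M - (c *m r)^T) = x - (x *m r^T) 0 0 *: c^T.
Proof.
by rewrite mulmxBr mulmx1 trmx_mul mulmxA -mul_scalar_mx -mx11_scalar.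
Qed.

Definition acts_by_En (M : 'M[R]_(n + n)) :=
  forall v w, v *m w^T = 1%:M -> exists sigma tau,
    En_pair sigma tau /\ row_mx v w *m M = row_mx (v *m sigma) (w *m tau).

Lemma acts_by_En1 : acts_by_En 1%:M.
Proof.
move=> v w _; exists 1%:M, 1%:M.
by rewrite !mulmx1; split; first exact: En_pair1.
Qed.

Lemma acts_by_En_mul M N : acts_by_En M -> acts_by_En N -> acts_by_En (M *m N).
Proof.
move=> actM actN v w vw; have [s1 [t1 [[E1 l1 r1] e1]]] := actM v w vw.
have vw1 : (v *m s1) *m (w *m t1)^T = 1%:M.
  have st : s1 *m t1^T = 1%:M by rewrite -[s1]trmxK -trmx_mul l1 trmx1.
  by rewrite trmx_mul mulmxA -[v *m s1 *m _]mulmxA st mulmx1 vw.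
have [s2 [t2 [P2 e2]]] := actN _ _ vw1.
exists (s1 *m s2), (t1 *m t2); split; first exact: En_pair_mul.
by rewrite mulmxA e1 e2 !mulmxA.
Qed.

Definition wedge_row x (i j : 'I_n) : 'rV[R]_n :=
  x 0 i *: delta_mx 0 j - x 0 j *: delta_mx 0 i.

Lemma wedge_row_orth x i j : wedge_row x i j *m x^T = 0.
Proof.
rewrite mulmxBl -!scalemxAl -!rowE; apply/rowP => b.
by rewrite !mxE (ord1 b) mulrC subrr.
Qed.

Lemma wedge_row_orthT x i j : x *m (wedge_row x i j)^T = 0.
Proof. by rewrite -[x in x *m _]trmxK -trmx_mul wedge_row_orth trmx0. Qed.

Lemma wedge_row_out x i j (k : 'I_n) :
  k != i -> k != j -> wedge_row x i j 0 k = 0.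
Proof.
by move=> ki kj; rewrite !mxE (negbTE ki) (negbTE kj) !andbF !mulr0 subrr.
Qed.

Lemma row_mul_EOgen (x : 'rV[R]_(n + n)) i j l :
  x *m EOgen i j l
    = x + (l * x 0 i) *: delta_mx 0 j - (l * x 0 (dp j)) *: delta_mx 0 (dp i).
Proof.
have row_mul_delta a b : x *m delta_mx a b = x 0 a *: delta_mx 0 b.
  rewrite -(mul_delta_mx (0 : 'I_1) a) mulmxA -colE.
  by rewrite [col a x]mx11_scalar mul_scalar_mx mxE.
by rewrite EOgenE mulmxBr mulmxDr mulmx1 -!scalemxAr !row_mul_delta !scalerA.
Qed.

Lemma acts_by_En_transvection (M : 'M[R]_(n + n)) :
  (forall v w, v *m w^T = 1%:M -> exists c r (k : 'I_n),
    [/\ c k 0 = 0 \/ r 0 k = 0, r *m c = 0 &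
        row_mx v w *m M
          = row_mx (v + (v *m c) 0 0 *: r) (w - (w *m r^T) 0 0 *: c^T)]) ->
  acts_by_En M.
Proof.
move=> transM v w /transM [c [r [k [crk rc ->]]]].
exists (1%:M + c *m r), (1%:M - (c *m r)^T).
by rewrite mulmx_transvection mulmx_transvection_invT; split => //;
  exact: En_pair_transvection crk rc.
Qed.

Lemma acts_by_En_EOgen (i j : 'I_(n + n)) (l : R) :
  (3 <= n)%N -> i != j -> acts_by_En (EOgen i j l).
Proof.
move=> n3 ij; apply: acts_by_En_transvection => v w vw.
have wv : w *m v^T = 1%:M by rewrite -[w]trmxK -trmx_mul vw trmx1.
rewrite row_mul_EOgen.
move: ij; case: (split_ordP i) => i0 ->; case: (split_ordP j) => j0 -> ij;
  rewrite ?dp_lshift ?dp_rshift ?row_mxEl ?row_mxEr ?delta_mx_lshift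
          ?delta_mx_rshift !scale_row_mx !scaler0 opp_row_mx !add_row_mx
          ?oppr0 ?addr0.
- have ji : j0 != i0 by apply: contraNneq ij => ->.
  exists (delta_mx i0 0), (l *: delta_mx 0 j0), j0; split.
  + by left; rewrite mxE (negbTE ji).
  + by rewrite -scalemxAl mul_delta_mx_0 ?scaler0.
  + rewrite [(l *: _)^T]linearZ /= trmx_delta -scalemxAr -!colE.
    by congr row_mx; apply/rowP => b; rewrite !mxE !eqxx ?andbT; ring.
- have [k /andP [ki kj]] := exists_ord_neq2 i0 j0 n3.
  set a := l *: wedge_row v i0 j0.
  have va : v *m (- a^T) = 0.
    by rewrite mulmxN [a^T]linearZ /= -scalemxAr wedge_row_orthT scaler0 oppr0.
  exists (- a^T), v, k; split=> //.
    by left; rewrite 3!mxE wedge_row_out ?mulr0 ?oppr0.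
  rewrite va wv !mxE eqxx mulr1n scale0r addr0 scale1r linearN /= trmxK opprK.
  by congr row_mx; apply/rowP => b; rewrite !mxE; ring.
- have [k /andP [ki kj]] := exists_ord_neq2 i0 j0 n3.
  set b := l *: wedge_row w i0 j0.
  have wb : w *m b^T = 0.
    by rewrite [b^T]linearZ /= -scalemxAr wedge_row_orthT scaler0.
  exists w^T, b, k; split; first by right; rewrite mxE wedge_row_out ?mulr0.
    by rewrite -scalemxAl wedge_row_orth scaler0.
  rewrite vw wb !mxE eqxx mulr1n scale0r subr0 scale1r.
  by congr row_mx; apply/rowP => x; rewrite !mxE; ring.
- have ij0 : i0 != j0 by apply: contraNneq ij => ->.
  exists (delta_mx j0 0), (- l *: delta_mx 0 i0), i0; split.
  + by left; rewrite mxE (negbTE ij0).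
  + by rewrite -scalemxAl mul_delta_mx_0 ?scaler0.
  + rewrite [(- l *: _)^T]linearZ /= trmx_delta -scalemxAr -!colE.
    by congr row_mx; apply/rowP => b; rewrite !mxE !eqxx ?andbT; ring.
Qed.

Lemma acts_by_En_EO (M : 'M[R]_(n + n)) : (3 <= n)%N -> in_EO M -> acts_by_En M.
Proof.
move=> n3; elim=> [|i j l M' ij _ IH]; first exact: acts_by_En1.
exact: acts_by_En_mul (acts_by_En_EOgen l n3 ij) IH.
Qed.

End HyperbolicAction.

Theorem theorem4p1 (R : comPzRingType) (n : nat) (A : unitAlgType R)
    (iota : {linear 'rV[R]_(n + n) -> A}) (star : A -> A) :
  (3 <= n)%N ->
  clifford_rel iota -> clifford_universal iota ->
  canonical_involution iota star ->
  forall v w : 'rV[R]_n, (v *m w^T) 0 0 = 1 ->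
  forall g : A, in_Epin iota star g ->
  exists (sigma tau : 'M[R]_n),
    [/\ in_En sigma, tau *m sigma^T = 1%:M, sigma^T *m tau = 1%:M &
        g * iota (row_mx v w) * g^-1 = iota (row_mx (v *m sigma) (w *m tau))].
Proof.
move=> n3 _ _ _ v w vw g [_ [M [EO_M piM]]].
have vw1 : v *m w^T = 1%:M by rewrite [v *m w^T]mx11_scalar vw.
have [sigma [tau [[En_sigma tau_l tau_r] act]]] := acts_by_En_EO n3 EO_M vw1.
by exists sigma, tau; split => //; rewrite piM act.
Qed.
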